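(* For a semi-abelian category $\mathcal C$ the following are equivalent: (i) $\mathcal C$ satisfies (ToN), i.e. every composite of two normal monomorphisms is a normal monomorphism; (ii) every normal subobject is characteristic; (iii) for every object $B$, the kernel functor $\mathrm{Ker}_B\colon\mathsf{Pt}_B(\mathcal C)\to\mathcal C$ creates normal subobjects.
   Context: Semi-abelian category: pointed, Barr-exact, protomodular, with binary coproducts. A normal monomorphism/subobject is a kernel. $\mathsf{Pt}_B(\mathcal C)$: points $(A,\alpha,\beta)$ with $\alpha\colon A\to B$, $\beta\colon B\to A$, $\alpha\beta=1_B$; $\mathrm{Ker}_B(A,\alpha,\beta)=\mathrm{Ker}(\alpha)$. A subobject $h\colon H\rightarrowtail G$ is characteristic if for every split extension $G\xrightarrow{k}A\overset{\alpha}{\underset{\beta}{\rightleftarrows}}B$ (with $k=\ker\alpha$, $\alpha\beta=1_B$) there is a split extension $H\xrightarrow{k'}A'\overset{\alpha'}{\underset{\beta'}{\rightleftarrows}}B$ and a morphism $h'\colon A'\to A$ with $h'k'=kh$, $\alpha h'=\alpha'$, $h'\beta'=\beta$. A functor $F\colon\mathcal C\to\mathcal D$ between pointed categories creates normal subobjects if for every object $A$ and every normal subobject $k'\colon K'\rightarrowtail F(A)$ there is a unique normal subobject $k\colon K\rightarrowtail A$ with $F(k)=k'$. *)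

From Stdlib Require Import ProofIrrelevance.

Set Implicit Arguments.

(** * Categories (hom-types with Leibniz equality of morphisms) *)
Record Category := {
  Ob :> Type;
  Hom : Ob -> Ob -> Type;
  idm : forall A : Ob, Hom A A;
  comp : forall A B D : Ob, Hom B D -> Hom A B -> Hom A D;
  comp_assoc : forall (A B D E : Ob) (h : Hom D E) (g : Hom B D) (f : Hom A B),
      comp h (comp g f) = comp (comp h g) f;
  id_left : forall (A B : Ob) (f : Hom A B), comp (idm B) f = f;
  id_right : forall (A B : Ob) (f : Hom A B), comp f (idm A) = f }.

Arguments Hom {c} _ _.
Arguments idm {c} _.
Arguments comp {c A B D} _ _.
Notation "g ∘ f" := (comp g f) (at level 40, left associativity).

Section Basics.
Context {C : Category}.

Definition iso {A B : C} (f : Hom A B) : Prop :=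
  exists g : Hom B A, g ∘ f = idm A /\ f ∘ g = idm B.

Definition mono {A B : C} (f : Hom A B) : Prop :=
  forall (Z : C) (u v : Hom Z A), f ∘ u = f ∘ v -> u = v.

Definition sameSubobject {D1 D2 A : C} (m1 : Hom D1 A) (m2 : Hom D2 A) : Prop :=
  exists i : Hom D1 D2, iso i /\ m2 ∘ i = m1.

Definition isInitial (I : C) : Prop :=
  forall X : C, exists f : Hom I X, forall g : Hom I X, g = f.
Definition isTerminal (T : C) : Prop :=
  forall X : C, exists f : Hom X T, forall g : Hom X T, g = f.
Definition isZeroObject (Z : C) : Prop := isInitial Z /\ isTerminal Z.

Definition Pointed : Prop := exists Z : C, isZeroObject Z.

Definition zeroMor {X Y : C} (f : Hom X Y) : Prop :=
  exists (Z : C) (a : Hom X Z) (b : Hom Z Y), isZeroObject Z /\ f = b ∘ a.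

Definition isKernel {K A Y : C} (k : Hom K A) (f : Hom A Y) : Prop :=
  zeroMor (f ∘ k) /\
  forall (Z : C) (g : Hom Z A), zeroMor (f ∘ g) ->
    exists u : Hom Z K, k ∘ u = g /\ forall u' : Hom Z K, k ∘ u' = g -> u' = u.

Definition normalMono {K A : C} (k : Hom K A) : Prop :=
  exists (Y : C) (f : Hom A Y), isKernel k f.

Definition isPullback {P X Y Z : C} (p1 : Hom P X) (p2 : Hom P Y)
    (f : Hom X Z) (g : Hom Y Z) : Prop :=
  f ∘ p1 = g ∘ p2 /\
  forall (Q : C) (q1 : Hom Q X) (q2 : Hom Q Y), f ∘ q1 = g ∘ q2 ->
    exists u : Hom Q P, (p1 ∘ u = q1 /\ p2 ∘ u = q2) /\
      forall u' : Hom Q P, p1 ∘ u' = q1 /\ p2 ∘ u' = q2 -> u' = u.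

Definition hasTerminal : Prop := exists T : C, isTerminal T.
Definition hasPullbacks : Prop :=
  forall (X Y Z : C) (f : Hom X Z) (g : Hom Y Z),
    exists (P : C) (p1 : Hom P X) (p2 : Hom P Y), isPullback p1 p2 f g.
Definition FinitelyComplete : Prop := hasTerminal /\ hasPullbacks.

Definition isCoequalizer {R X Q : C} (f g : Hom R X) (q : Hom X Q) : Prop :=
  q ∘ f = q ∘ g /\
  forall (W : C) (h : Hom X W), h ∘ f = h ∘ g ->
    exists u : Hom Q W, u ∘ q = h /\ forall u' : Hom Q W, u' ∘ q = h -> u' = u.

Definition regularEpi {X Q : C} (e : Hom X Q) : Prop :=
  exists (R : C) (f g : Hom R X), isCoequalizer f g e.

Definition isKernelPair {R X Y : C} (r1 r2 : Hom R X) (f : Hom X Y) : Prop :=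
  isPullback r1 r2 f f.

Definition RegularCat : Prop :=
  FinitelyComplete /\
  (forall (R X Y : C) (r1 r2 : Hom R X) (f : Hom X Y), isKernelPair r1 r2 f ->
     exists (Q : C) (q : Hom X Q), isCoequalizer r1 r2 q) /\
  (forall (X Y Z P : C) (e : Hom X Z) (g : Hom Y Z) (p1 : Hom P X) (p2 : Hom P Y),
     regularEpi e -> isPullback p1 p2 e g -> regularEpi p2).

Definition isEquivRel {R X : C} (r1 r2 : Hom R X) : Prop :=
  (forall (Z : C) (u v : Hom Z R), r1 ∘ u = r1 ∘ v -> r2 ∘ u = r2 ∘ v -> u = v) /\
  (exists d : Hom X R, r1 ∘ d = idm X /\ r2 ∘ d = idm X) /\
  (exists s : Hom R R, r1 ∘ s = r2 /\ r2 ∘ s = r1) /\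
  (forall (Z : C) (a b : Hom Z R), r2 ∘ a = r1 ∘ b ->
     exists t : Hom Z R, r1 ∘ t = r1 ∘ a /\ r2 ∘ t = r2 ∘ b).

Definition BarrExact : Prop :=
  RegularCat /\
  forall (R X : C) (r1 r2 : Hom R X), isEquivRel r1 r2 ->
    exists (Y : C) (f : Hom X Y), isKernelPair r1 r2 f.

(** Bourn protomodularity: change of base of points along any f : X -> Y
    reflects isomorphisms *)
Definition Protomodular : Prop :=
  forall (X Y : C) (f : Hom X Y)
         (A : C) (a : Hom A Y) (b : Hom Y A), a ∘ b = idm Y ->
  forall (A' : C) (a' : Hom A' Y) (b' : Hom Y A'), a' ∘ b' = idm Y ->
  forall phi : Hom A A', a' ∘ phi = a -> phi ∘ b = b' ->
  forall (P : C) (p1 : Hom P X) (p2 : Hom P A), isPullback p1 p2 f a ->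
  forall (P' : C) (p1' : Hom P' X) (p2' : Hom P' A'), isPullback p1' p2' f a' ->
  forall psi : Hom P P', p1' ∘ psi = p1 -> p2' ∘ psi = phi ∘ p2 ->
    iso psi -> iso phi.

Definition hasBinaryCoproducts : Prop :=
  forall X Y : C, exists (S : C) (i1 : Hom X S) (i2 : Hom Y S),
    forall (Z : C) (f : Hom X Z) (g : Hom Y Z),
      exists h : Hom S Z, (h ∘ i1 = f /\ h ∘ i2 = g) /\
        forall h' : Hom S Z, h' ∘ i1 = f /\ h' ∘ i2 = g -> h' = h.

Definition SemiAbelian : Prop :=
  Pointed /\ BarrExact /\ Protomodular /\ hasBinaryCoproducts.

Definition ToN : Prop :=
  forall (A B D : C) (m : Hom A B) (n : Hom B D),
    normalMono m -> normalMono n -> normalMono (n ∘ m).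

Definition characteristic {H G : C} (h : Hom H G) : Prop :=
  forall (A B : C) (k : Hom G A) (a : Hom A B) (b : Hom B A),
    isKernel k a -> a ∘ b = idm B ->
    exists (A' : C) (k' : Hom H A') (a' : Hom A' B) (b' : Hom B A'),
      isKernel k' a' /\ a' ∘ b' = idm B /\
      exists h' : Hom A' A, h' ∘ k' = k ∘ h /\ a ∘ h' = a' /\ h' ∘ b' = b.

End Basics.

Record Point (C : Category) (B : C) := {
  pA : C;
  pal : Hom pA B;
  pbe : Hom B pA;
  psplit : pal ∘ pbe = idm B }.
Arguments Point {C} B.
Arguments pA {C B} _.
Arguments pal {C B} _.
Arguments pbe {C B} _.
Arguments psplit {C B} _.

Definition PtHom {C : Category} {B : C} (P Q : Point B) : Type :=
  { phi : Hom (pA P) (pA Q) | pal Q ∘ phi = pal P /\ phi ∘ pbe P = pbe Q }.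

Section PtCat.
Variables (C : Category) (B : C).

Program Definition Pt_id (P : Point B) : PtHom P P := exist _ (idm (pA P)) _.
Next Obligation. split; [apply id_right | apply id_left]. Qed.

Program Definition Pt_comp (P Q R : Point B) (g : PtHom Q R) (f : PtHom P Q) : PtHom P R :=
  exist _ (proj1_sig g ∘ proj1_sig f) _.
Next Obligation.
  destruct g as [g [g1 g2]], f as [f [f1 f2]]; simpl.
  split; [rewrite comp_assoc, g1; exact f1 | rewrite <- comp_assoc, f2; exact g2].
Qed.

Lemma PtHom_eq (P Q : Point B) (f g : PtHom P Q) : proj1_sig f = proj1_sig g -> f = g.
Proof.
  destruct f as [f pf], g as [g pg]; simpl; intros ->.
  f_equal; apply proof_irrelevance.
Qed.

Definition Pt : Category.
Proof.
  refine {| Ob := Point B; Hom := @PtHom C B; idm := Pt_id; comp := Pt_comp |}.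
  - intros; apply PtHom_eq; simpl; apply comp_assoc.
  - intros; apply PtHom_eq; simpl; apply id_left.
  - intros; apply PtHom_eq; simpl; apply id_right.
Defined.
End PtCat.

(** The kernel functor Ker_B : Pt_B(C) -> C, applied to a morphism of points
    m : Q -> P, computed w.r.t. a given kernel k of pal P, represents the
    subobject h of dom k: there are a kernel k' of pal Q and the induced
    map u = Ker_B(m) with k ∘ u = m ∘ k', and u is the same subobject as h. *)
Definition KerImageIs {C : Category} {B : C} {P Q : Point B} {G H : C}
    (k : Hom G (pA P)) (m : PtHom Q P) (h : Hom H G) : Prop :=
  exists (K' : C) (k' : Hom K' (pA Q)) (u : Hom K' G),
    isKernel k' (pal Q) /\ k ∘ u = proj1_sig m ∘ k' /\ sameSubobject u h.

Definition KerCreatesNormalSubobjects (C : Category) (B : C) : Prop :=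
  forall (P : Point B) (G : C) (k : Hom G (pA P)), isKernel k (pal P) ->
  forall (H : C) (h : Hom H G), normalMono h ->
    (exists (Q : Point B) (m : PtHom Q P),
        @normalMono (Pt C B) Q P m /\ KerImageIs k m h) /\
    (forall (Q1 Q2 : Point B) (m1 : PtHom Q1 P) (m2 : PtHom Q2 P),
        @normalMono (Pt C B) Q1 P m1 -> @normalMono (Pt C B) Q2 P m2 ->
        KerImageIs k m1 h -> KerImageIs k m2 h ->
        @sameSubobject (Pt C B) Q1 Q2 P m1 m2).


(* (i) -> (iii): if [H] is normal in [Ker(alpha)], (ToN) makes it normal in the total
   object [A], say the kernel of [q]; the kernel in [Pt_B] of [<q, alpha>] then restricts
   to [H]. It is unique because in a protomodular category the kernel and the section of a
   split epi are jointly strongly epic, so a normal subpoint is determined by its kernel.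
   (iii) -> (ii): the normal subpoint created from [H] is the required split extension.
   (ii) -> (i): for [A <| B <| D] with [B] the kernel of [f], [B] is the kernel of the first
   projection of the kernel pair [R] of [f]; as [A] is characteristic in [B] this split
   extension restricts to one with kernel [A], i.e. a reflexive relation [A' >-> R] on [D].
   Protomodular categories are Mal'tsev, so it is an equivalence relation; by exactness it is
   a kernel pair, and its normalisation [A -> D] is a kernel. *)

Arguments comp_assoc {c A B D E} h g f.
Arguments id_left {c A B} f.
Arguments id_right {c A B} f.

Lemma comp_eq_r {C : Category} {W X Y Z : C} {f : Hom Y Z} {g : Hom X Y} {k : Hom X Z} :
  f ∘ g = k -> forall x : Hom W X, f ∘ (g ∘ x) = k ∘ x.
Proof. intros E x; rewrite comp_assoc, E; reflexivity. Qed.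

Ltac assoc_r := repeat rewrite <- comp_assoc.

Section Elementary.
Context {C : Category}.

Lemma mono_comp {X Y Z : C} (f : Hom Y Z) (g : Hom X Y) :
  mono f -> mono g -> mono (f ∘ g).
Proof. intros mf mg W u v E. apply mg, mf. rewrite !comp_assoc; exact E. Qed.

Lemma iso_mono {X Y : C} (f : Hom X Y) : iso f -> mono f.
Proof.
  intros [g [gf _]] W u v E.
  rewrite <- (id_left u), <- (id_left v), <- gf, <- !comp_assoc, E; reflexivity.
Qed.

Lemma zeroMor_compl {X Y Z : C} (g : Hom Y Z) (f : Hom X Y) : zeroMor f -> zeroMor (g ∘ f).
Proof.
  intros (W & a & b & hW & ->). exists W, a, (g ∘ b); split; [exact hW | apply comp_assoc].
Qed.

Lemma zeroMor_compr {X Y Z : C} (g : Hom Y Z) (f : Hom X Y) : zeroMor g -> zeroMor (g ∘ f).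
Proof.
  intros (W & a & b & hW & ->).
  exists W, (a ∘ f), b; split; [exact hW | symmetry; apply comp_assoc].
Qed.

Lemma from_initial_eq {I X : C} : isInitial I -> forall f g : Hom I X, f = g.
Proof. intros hI f g. destruct (hI X) as [u Hu]. rewrite (Hu f), (Hu g); reflexivity. Qed.

Lemma to_terminal_eq {T X : C} : isTerminal T -> forall f g : Hom X T, f = g.
Proof. intros hT f g. destruct (hT X) as [u Hu]. rewrite (Hu f), (Hu g); reflexivity. Qed.

Lemma pullback_ext {P X Y Z : C} {p1 : Hom P X} {p2 : Hom P Y} {f : Hom X Z} {g : Hom Y Z} :
  isPullback p1 p2 f g ->
  forall (W : C) (u v : Hom W P), p1 ∘ u = p1 ∘ v -> p2 ∘ u = p2 ∘ v -> u = v.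
Proof.
  intros [Hc Hu] W u v E1 E2.
  destruct (Hu W (p1 ∘ v) (p2 ∘ v)) as [w [_ Hw]]; [rewrite !comp_assoc, Hc; reflexivity |].
  rewrite (Hw u (conj E1 E2)), (Hw v (conj eq_refl eq_refl)); reflexivity.
Qed.

Lemma pullback_lift {P X Y Z : C} {p1 : Hom P X} {p2 : Hom P Y} {f : Hom X Z} {g : Hom Y Z} :
  isPullback p1 p2 f g ->
  forall (W : C) (q1 : Hom W X) (q2 : Hom W Y), f ∘ q1 = g ∘ q2 ->
  exists u : Hom W P, p1 ∘ u = q1 /\ p2 ∘ u = q2.
Proof. intros [_ Hu] W q1 q2 E. destruct (Hu W q1 q2 E) as [u [Hq _]]; eauto. Qed.

Lemma pullback_mono {P X Y Z : C} {p1 : Hom P X} {p2 : Hom P Y} {f : Hom X Z} {g : Hom Y Z} :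
  isPullback p1 p2 f g -> mono f -> mono p2.
Proof.
  intros Hp mf W u v E. apply (pullback_ext Hp); [| exact E].
  apply mf. rewrite !comp_assoc, (proj1 Hp), <- !comp_assoc, E; reflexivity.
Qed.

Lemma kernel_mono {K A Y : C} {k : Hom K A} {f : Hom A Y} : isKernel k f -> mono k.
Proof.
  intros [hz hu] Z u v E.
  destruct (hu Z (k ∘ u)) as [w [_ Hw]]; [rewrite comp_assoc; apply zeroMor_compr, hz |].
  rewrite (Hw u eq_refl), (Hw v (eq_sym E)); reflexivity.
Qed.

Lemma normalMono_mono {K A : C} (k : Hom K A) : normalMono k -> mono k.
Proof. intros (Y & f & Hk). exact (kernel_mono Hk). Qed.

Lemma isKernel_comp_iso {K H X Y : C} (k : Hom K X) (p : Hom X Y) (i : Hom K H) (j : Hom H K) :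
  j ∘ i = idm K -> i ∘ j = idm H -> isKernel k p -> isKernel (k ∘ j) p.
Proof.
  intros ji ij [hz hu]. split; [rewrite comp_assoc; apply zeroMor_compr, hz |].
  intros T g Hg. destruct (hu T g Hg) as [v [Hv Hvu]].
  exists (i ∘ v). split.
  - assoc_r. rewrite (comp_eq_r ji), id_left; exact Hv.
  - intros u' Hu'. rewrite <- (Hvu (j ∘ u')); [| rewrite comp_assoc; exact Hu'].
    rewrite comp_assoc, ij, id_left; reflexivity.
Qed.

End Elementary.

Section ZeroObject.
Context {C : Category} (Z0 : C) (hZ : isZeroObject Z0).

Lemma zeroMor_via_zero {X Y : C} (a : Hom X Z0) (b : Hom Z0 Y) : zeroMor (b ∘ a).
Proof. exists Z0, a, b; split; [exact hZ | reflexivity]. Qed.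

Lemma zeroMor_factor_zero {X Y : C} (f : Hom X Y) :
  zeroMor f -> forall (a : Hom X Z0) (b : Hom Z0 Y), f = b ∘ a.
Proof.
  intros (W & a' & b' & [hWi _] & ->) a b.
  destruct (proj1 hZ W) as [e _]. destruct (proj2 hZ W) as [e' _].
  assert (ee' : e ∘ e' = idm W) by apply (from_initial_eq hWi).
  rewrite <- (id_right b'), <- ee', comp_assoc, <- comp_assoc.
  rewrite (from_initial_eq (proj1 hZ) (b' ∘ e) b), (to_terminal_eq (proj2 hZ) (e' ∘ a') a).
  reflexivity.
Qed.

Lemma zeroMor_unique {X Y : C} (f g : Hom X Y) : zeroMor f -> zeroMor g -> f = g.
Proof.
  intros zf zg. destruct (proj1 hZ Y) as [b _]. destruct (proj2 hZ X) as [a _].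
  rewrite (zeroMor_factor_zero f zf a b), (zeroMor_factor_zero g zg a b); reflexivity.
Qed.

Lemma zeroMor_exists (X Y : C) : exists f : Hom X Y, zeroMor f.
Proof.
  destruct (proj1 hZ Y) as [b _]. destruct (proj2 hZ X) as [a _].
  exists (b ∘ a); apply zeroMor_via_zero.
Qed.

Lemma pullback_over_zero_lift {P X Y : C} {p1 : Hom P X} {p2 : Hom P Y}
    {tX : Hom X Z0} {tY : Hom Y Z0} :
  isPullback p1 p2 tX tY ->
  forall (W : C) (q1 : Hom W X) (q2 : Hom W Y), exists u : Hom W P, p1 ∘ u = q1 /\ p2 ∘ u = q2.
Proof. intros Hp W q1 q2. apply (pullback_lift Hp), (to_terminal_eq (proj2 hZ)). Qed.

Lemma kernel_pullback_zero {K X E : C} (k : Hom K X) (p : Hom X E) :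
  isKernel k p -> forall (t : Hom K Z0) (z : Hom Z0 E), isPullback t k z p.
Proof.
  intros [hz hu] t z. split; [apply zeroMor_unique; [apply zeroMor_via_zero | exact hz] |].
  intros Q q1 q2 E0.
  destruct (hu Q q2) as [u [Hu1 Hu2]]; [rewrite <- E0; apply zeroMor_via_zero |].
  exists u; split; [split; [apply (to_terminal_eq (proj2 hZ)) | exact Hu1] |].
  intros u' [_ H']; auto.
Qed.

Lemma kernel_in_kernel_pair {R B D Y : C} {n : Hom B D} {f : Hom D Y} {r1 r2 : Hom R D} :
  isKernel n f -> isKernelPair r1 r2 f -> exists io : Hom B R, isKernel io r1 /\ r2 ∘ io = n.
Proof.
  intros Kn HR.
  destruct (zeroMor_exists B D) as [z Hz].
  destruct (pullback_lift HR _ z n) as [io [Hio1 Hio2]].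
  { apply zeroMor_unique; [apply zeroMor_compl, Hz | exact (proj1 Kn)]. }
  exists io; split; [split; [rewrite Hio1; exact Hz |] | exact Hio2].
  intros T g Hg.
  destruct (proj2 Kn T (r2 ∘ g)) as [v [Hv Hvu]].
  { rewrite comp_assoc, <- (proj1 HR), <- comp_assoc. apply zeroMor_compl, Hg. }
  exists v; split.
  - apply (pullback_ext HR).
    + rewrite (comp_eq_r Hio1). apply zeroMor_unique; [apply zeroMor_compr, Hz | exact Hg].
    + rewrite (comp_eq_r Hio2); exact Hv.
  - intros u' Hu'. apply Hvu. rewrite <- Hu', comp_assoc, Hio2; reflexivity.
Qed.

Lemma kernel_of_kernel_pair {R K D W : C} {r1 r2 : Hom R D} {g : Hom D W} {k : Hom K R} :
  isKernelPair r1 r2 g -> isKernel k r1 -> isKernel (r2 ∘ k) g.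
Proof.
  intros HR Kk. split.
  - rewrite comp_assoc, <- (proj1 HR), <- comp_assoc. apply zeroMor_compl, (proj1 Kk).
  - intros T e He.
    destruct (zeroMor_exists T D) as [z Hz].
    destruct (pullback_lift HR _ z e) as [u [Hu1 Hu2]].
    { apply zeroMor_unique; [apply zeroMor_compl, Hz | exact He]. }
    destruct (proj2 Kk T u) as [v [Hv _]]; [rewrite Hu1; exact Hz |].
    exists v; split; [rewrite <- comp_assoc, Hv; exact Hu2 |].
    intros v' Hv'. apply (kernel_mono Kk), (pullback_ext HR).
    + apply zeroMor_unique; rewrite comp_assoc; apply zeroMor_compr, (proj1 Kk).
    + rewrite !comp_assoc, Hv'. rewrite <- comp_assoc, Hv; exact (eq_sym Hu2).
Qed.

Hypothesis hPB : hasPullbacks (C:=C).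

Lemma kernel_exists {X E : C} (p : Hom X E) : exists (K : C) (k : Hom K X), isKernel k p.
Proof.
  destruct (proj1 hZ E) as [z _].
  destruct (hPB _ _ _ z p) as (P & p1 & p2 & Hp).
  exists P, p2. split; [rewrite <- (proj1 Hp); apply zeroMor_via_zero |].
  intros T g Hg. destruct (proj2 hZ T) as [t _].
  destruct (proj2 Hp T t g) as [u [[Hu1 Hu2] Hu]];
    [apply zeroMor_unique; [apply zeroMor_via_zero | exact Hg] |].
  exists u; split; [exact Hu2 |].
  intros u' Hu'. apply Hu; split; [apply (to_terminal_eq (proj2 hZ)) | exact Hu'].
Qed.

End ZeroObject.

Definition related {C : Category} {R X T : C} (r1 r2 : Hom R X) (x y : Hom T X) : Prop :=
  exists w : Hom T R, r1 ∘ w = x /\ r2 ∘ w = y.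

Definition jointly_mono {C : Category} {R X Y : C} (r1 : Hom R X) (r2 : Hom R Y) : Prop :=
  forall (Z : C) (u v : Hom Z R), r1 ∘ u = r1 ∘ v -> r2 ∘ u = r2 ∘ v -> u = v.

Section Protomodular.
Context {C : Category} (Z0 : C) (hZ : isZeroObject Z0)
  (hPB : hasPullbacks (C:=C)) (hPM : Protomodular (C:=C)).

(* The kernel and the section of a split epi are jointly strongly epic: protomodularity
   applied along [0 -> E], where [mu] restricts to an isomorphism of kernels. *)
Lemma mono_iso_of_section_kernel {X E M : C} (p : Hom X E) (s : Hom E X) (mu : Hom M X) :
  p ∘ s = idm E -> mono mu -> (exists s1, mu ∘ s1 = s) ->
  (forall (T : C) (g : Hom T X), zeroMor (p ∘ g) -> exists w, mu ∘ w = g) -> iso mu.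
Proof.
  intros ps mmu [s1 Hs1] Hk.
  destruct (kernel_exists Z0 hZ hPB p) as (K & k & Kk).
  destruct (Hk K k (proj1 Kk)) as [k1 Hk1].
  assert (Kk1 : isKernel k1 (p ∘ mu)).
  { split; [rewrite <- comp_assoc, Hk1; exact (proj1 Kk) |].
    intros T g Hg.
    destruct (proj2 Kk T (mu ∘ g)) as [v [Hv _]]; [rewrite comp_assoc; exact Hg |].
    exists v; split.
    - apply mmu. rewrite comp_assoc, Hk1; exact Hv.
    - intros u' Hu'. apply (kernel_mono Kk).
      rewrite Hv, <- Hk1, <- comp_assoc, Hu'; reflexivity. }
  destruct (proj1 hZ E) as [z _]. destruct (proj2 hZ K) as [t _].
  assert (s1_split : (p ∘ mu) ∘ s1 = idm E) by (rewrite <- comp_assoc, Hs1; exact ps).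
  apply (hPM Z0 E z M (p ∘ mu) s1 s1_split X p s ps mu eq_refl Hs1
           K t k1 (kernel_pullback_zero Z0 hZ _ _ Kk1 t z)
           K t k (kernel_pullback_zero Z0 hZ _ _ Kk t z) (idm K)).
  - apply id_right.
  - rewrite id_right; symmetry; exact Hk1.
  - exists (idm K); split; apply id_left.
Qed.

Lemma factors_through_mono_of_section_kernel {X E A R : C} (p : Hom X E) (s : Hom E X)
    (h : Hom A R) (rho : Hom X R) :
  p ∘ s = idm E -> mono h -> (exists w, h ∘ w = rho ∘ s) ->
  (forall (T : C) (g : Hom T X), zeroMor (p ∘ g) -> exists w, h ∘ w = rho ∘ g) ->
  exists t, h ∘ t = rho.
Proof.
  intros ps mh [w Hw] Hk.
  destruct (hPB _ _ _ h rho) as (M & m1 & mu & Hp).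
  destruct (pullback_lift Hp _ w s Hw) as [s1 [_ Hs1]].
  destruct (mono_iso_of_section_kernel p s mu ps (pullback_mono Hp mh) (ex_intro _ s1 Hs1))
    as [mi [_ Hmi]].
  { intros T g Hg. destruct (Hk T g Hg) as [w' Hw'].
    destruct (pullback_lift Hp _ w' g Hw') as [l [_ Hl]]; eauto. }
  exists (m1 ∘ mi). rewrite comp_assoc, (proj1 Hp), <- comp_assoc, Hmi; apply id_right.
Qed.

(* [phi] is mono iff its kernel pair [Q] is the diagonal; it suffices to check this on the
   kernel of the split epi [p ∘ q1], where it follows from [phi ∘ k] being mono. *)
Lemma mono_of_mono_on_kernel {X E X' K : C} (p : Hom X E) (s : Hom E X) (k : Hom K X)
    (phi : Hom X X') (p' : Hom X' E) :
  p ∘ s = idm E -> isKernel k p -> p' ∘ phi = p -> mono (phi ∘ k) -> mono phi.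
Proof.
  intros ps Kk Hp' mk.
  destruct (hPB _ _ _ phi phi) as (Q & q1 & q2 & Hq).
  destruct (pullback_lift Hq _ (idm X) (idm X) eq_refl) as [d [Hd1 Hd2]].
  assert (diagonal_over_kernel :
            forall (T : C) (g : Hom T Q), zeroMor (p ∘ (q1 ∘ g)) -> q1 ∘ g = q2 ∘ g).
  { intros T g Hg1.
    assert (Hg2 : zeroMor (p ∘ (q2 ∘ g))).
    { replace (p ∘ (q2 ∘ g)) with (p ∘ (q1 ∘ g)); [exact Hg1 |].
      rewrite <- Hp', <- !comp_assoc; f_equal. rewrite !comp_assoc, (proj1 Hq); reflexivity. }
    destruct (proj2 Kk T _ Hg1) as [v1 [Hv1 _]]. destruct (proj2 Kk T _ Hg2) as [v2 [Hv2 _]].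
    rewrite <- Hv1, <- Hv2. f_equal. apply mk.
    assoc_r. rewrite Hv1, Hv2, !comp_assoc, (proj1 Hq); reflexivity. }
  assert (mono_d : mono d).
  { intros W u v Euv.
    rewrite <- (id_left u), <- (id_left v), <- Hd1, <- !comp_assoc, Euv; reflexivity. }
  destruct (factors_through_mono_of_section_kernel (p ∘ q1) (d ∘ s) d (idm Q)) as [t Ht].
  - assoc_r. rewrite (comp_eq_r Hd1), id_left; exact ps.
  - exact mono_d.
  - exists s; rewrite id_left; reflexivity.
  - intros T g Hg. exists (q1 ∘ g). rewrite id_left.
    rewrite <- comp_assoc in Hg. apply (pullback_ext Hq).
    + rewrite (comp_eq_r Hd1), id_left; reflexivity.
    + rewrite (comp_eq_r Hd2), id_left. apply diagonal_over_kernel, Hg.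
  - intros W u v Euv.
    destruct (pullback_lift Hq _ u v Euv) as [w [<- <-]].
    rewrite <- (id_left w), <- Ht, !comp_assoc, Hd1, Hd2; reflexivity.
Qed.

(* Reduces to the mono case through [<r1, r2> : R >-> X × X]. *)
Lemma related_of_section_kernel {R X X' E : C} (r1 r2 : Hom R X) (p : Hom X' E) (s : Hom E X')
    (x y : Hom X' X) :
  jointly_mono r1 r2 -> p ∘ s = idm E -> related r1 r2 (x ∘ s) (y ∘ s) ->
  (forall (T : C) (g : Hom T X'), zeroMor (p ∘ g) -> related r1 r2 (x ∘ g) (y ∘ g)) ->
  related r1 r2 x y.
Proof.
  intros jm ps Hs Hk.
  destruct (proj2 hZ X) as [tX _].
  destruct (hPB _ _ _ tX tX) as (P & pi1 & pi2 & HP).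
  destruct (pullback_over_zero_lift Z0 hZ HP _ r1 r2) as [h [Hh1 Hh2]].
  destruct (pullback_over_zero_lift Z0 hZ HP _ x y) as [rho [Hr1 Hr2]].
  assert (factors : forall (T : C) (g : Hom T X'),
             related r1 r2 (x ∘ g) (y ∘ g) -> exists w, h ∘ w = rho ∘ g).
  { intros T g [w [Hw1 Hw2]]. exists w. apply (pullback_ext HP).
    - rewrite (comp_eq_r Hh1), (comp_eq_r Hr1); exact Hw1.
    - rewrite (comp_eq_r Hh2), (comp_eq_r Hr2); exact Hw2. }
  destruct (factors_through_mono_of_section_kernel p s h rho ps) as [t Ht].
  - intros W u v Euv. apply jm.
    + rewrite <- Hh1, <- !comp_assoc, Euv; reflexivity.
    + rewrite <- Hh2, <- !comp_assoc, Euv; reflexivity.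
  - apply factors, Hs.
  - intros T g Hg. apply factors, Hk, Hg.
  - exists t. rewrite <- Hr1, <- Hr2, <- Ht, <- Hh1, <- Hh2, <- !comp_assoc; split; reflexivity.
Qed.

(* Protomodular categories are Mal'tsev: every reflexive relation is an equivalence relation. *)
Section ReflexiveRelation.
Context {R X : C} (r1 r2 : Hom R X) (jm : jointly_mono r1 r2)
  (d : Hom X R) (Hd1 : r1 ∘ d = idm X) (Hd2 : r2 ∘ d = idm X).

(* Over [Ker r1 × Ker r1 -> Ker r1], split by the diagonal, the kernel elements [(0, z)]
   are related via [z] itself. *)
Lemma related_kernel_elements (T : C) (w1 w2 : Hom T R) :
  zeroMor (r1 ∘ w1) -> zeroMor (r1 ∘ w2) -> related r1 r2 (r2 ∘ w1) (r2 ∘ w2).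
Proof.
  intros z1 z2.
  destruct (kernel_exists Z0 hZ hPB r1) as (K & k & Kk).
  destruct (proj2 hZ K) as [tK _].
  destruct (hPB _ _ _ tK tK) as (P & pi1 & pi2 & HP).
  destruct (pullback_over_zero_lift Z0 hZ HP _ (idm K) (idm K)) as [delta [Hdl1 Hdl2]].
  destruct (related_of_section_kernel r1 r2 pi1 delta (r2 ∘ (k ∘ pi1)) (r2 ∘ (k ∘ pi2))
              jm Hdl1) as [w [Hw1 Hw2]].
  - exists (d ∘ (r2 ∘ k)). assoc_r. rewrite Hdl1, Hdl2, (comp_eq_r Hd1), (comp_eq_r Hd2).
    rewrite !id_left, !id_right; split; reflexivity.
  - intros T' g Hg. exists (k ∘ (pi2 ∘ g)). split; [| assoc_r; reflexivity].
    apply (zeroMor_unique Z0 hZ).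
    + rewrite comp_assoc. apply zeroMor_compr, (proj1 Kk).
    + assoc_r. apply zeroMor_compl, zeroMor_compl, Hg.
  - destruct (proj2 Kk T w1 z1) as [v1 [Hv1 _]]. destruct (proj2 Kk T w2 z2) as [v2 [Hv2 _]].
    destruct (pullback_over_zero_lift Z0 hZ HP _ v1 v2) as [v [Hv1' Hv2']].
    exists (w ∘ v). rewrite (comp_eq_r Hw1), (comp_eq_r Hw2), <- Hv1, <- Hv2, <- Hv1', <- Hv2'.
    assoc_r; split; reflexivity.
Qed.

(* The triples [x R y, x R z] split over [x]; over [x = 0] this is [related_kernel_elements]. *)
Lemma related_euclidean (T : C) (u v : Hom T R) :
  r1 ∘ u = r1 ∘ v -> related r1 r2 (r2 ∘ u) (r2 ∘ v).
Proof.
  intros Euv.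
  destruct (hPB _ _ _ r1 r1) as (P & q1 & q2 & HP).
  destruct (pullback_lift HP _ d d eq_refl) as [sigma [Hs1 Hs2]].
  destruct (related_of_section_kernel r1 r2 (r1 ∘ q1) sigma (r2 ∘ q1) (r2 ∘ q2) jm)
    as [w [Hw1 Hw2]].
  - assoc_r. rewrite Hs1; exact Hd1.
  - exists d. assoc_r. rewrite Hs1, Hs2, Hd1, Hd2; split; reflexivity.
  - intros T' g Hg. rewrite <- comp_assoc in Hg. assoc_r.
    apply related_kernel_elements; [exact Hg |].
    rewrite (comp_eq_r (eq_sym (proj1 HP))), <- comp_assoc; exact Hg.
  - destruct (pullback_lift HP _ u v Euv) as [l [Hl1 Hl2]].
    exists (w ∘ l). rewrite (comp_eq_r Hw1), (comp_eq_r Hw2), <- Hl1, <- Hl2.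
    assoc_r; split; reflexivity.
Qed.

Lemma reflexive_relation_equivRel : isEquivRel r1 r2.
Proof.
  destruct (related_euclidean R (idm R) (d ∘ r1)) as [sy [Hsy1 Hsy2]].
  { rewrite comp_assoc, Hd1, id_left, id_right; reflexivity. }
  rewrite id_right in Hsy1. rewrite comp_assoc, Hd2, id_left in Hsy2.
  split; [exact jm | split; [exists d; auto | split; [exists sy; auto |]]].
  intros Z a b Hab.
  destruct (related_euclidean Z (sy ∘ a) b) as [t [Ht1 Ht2]].
  { rewrite comp_assoc, Hsy1; exact Hab. }
  exists t. rewrite Ht1, Ht2, comp_assoc, Hsy2; split; reflexivity.
Qed.

End ReflexiveRelation.
End Protomodular.

Lemma characteristic_ToN {C : Category} (HC : SemiAbelian (C:=C)) :
  (forall (H G : C) (h : Hom H G), normalMono h -> characteristic h) -> ToN (C:=C).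
Proof.
  intros Hch A B D m n Nm [Y [f Kn]].
  destruct HC as [[Z0 hZ] [[[[_ hPB] _] hEff] [hPM _]]].
  destruct (hPB D D Y f f) as (R & r1 & r2 & HR).
  destruct (pullback_lift HR _ (idm D) (idm D) eq_refl) as [d [Hd1 Hd2]].
  destruct (kernel_in_kernel_pair Z0 hZ Kn HR) as [io [Kio Hio]].
  destruct (Hch _ _ m Nm R D io r1 d Kio Hd1)
    as (A' & k' & a' & b' & Kk' & ab' & h' & E1 & E2 & E3).
  assert (mono_h' : mono h').
  { apply (mono_of_mono_on_kernel Z0 hZ hPB hPM a' b' k' h' r1 ab' Kk' E2).
    rewrite E1. apply mono_comp; [exact (kernel_mono Kio) | exact (normalMono_mono m Nm)]. }
  assert (jm : jointly_mono a' (r2 ∘ h')).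
  { intros Z u v Ea Er. apply mono_h', (pullback_ext HR).
    - rewrite !comp_assoc, E2; exact Ea.
    - rewrite !comp_assoc; exact Er. }
  assert (Heq : isEquivRel a' (r2 ∘ h')).
  { apply (reflexive_relation_equivRel Z0 hZ hPB hPM a' (r2 ∘ h') jm b' ab').
    rewrite <- comp_assoc, E3; exact Hd2. }
  destruct (hEff A' D a' (r2 ∘ h') Heq) as (W & g & Hkp).
  exists W, g.
  replace (n ∘ m) with ((r2 ∘ h') ∘ k'); [exact (kernel_of_kernel_pair Z0 hZ Hkp Kk') |].
  rewrite <- comp_assoc, E1, comp_assoc, Hio; reflexivity.
Qed.

Section Points.
Context {C : Category} {B : C}.

Definition zero_point : Point B :=
  {| pA := B; pal := idm B; pbe := idm B; psplit := id_left (idm B) |}.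

Definition to_zero_point (X : Point B) : @Hom (Pt C B) X zero_point.
Proof. exists (pal X). split; [apply id_left | apply psplit]. Defined.

Definition from_zero_point (X : Point B) : @Hom (Pt C B) zero_point X.
Proof. exists (pbe X). split; [apply psplit | apply id_right]. Defined.

Lemma Pt_zero_object : @isZeroObject (Pt C B) zero_point.
Proof.
  split; intros X.
  - exists (from_zero_point X). intros [g [g1 g2]]. apply PtHom_eq; simpl in *.
    rewrite <- g2, id_right; reflexivity.
  - exists (to_zero_point X). intros [g [g1 g2]]. apply PtHom_eq; simpl in *.
    rewrite <- g1, id_left; reflexivity.
Qed.

Lemma Pt_zeroMor {P Q : Point B} (f : PtHom P Q) :
  @zeroMor (Pt C B) P Q f <-> proj1_sig f = pbe Q ∘ pal P.
Proof.
  split.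
  - intros Hz.
    apply (f_equal (@proj1_sig _ _)
             (zeroMor_unique (C:=Pt C B) zero_point Pt_zero_object f
                (Pt_comp (from_zero_point Q) (to_zero_point P)) Hz
                (zeroMor_via_zero (C:=Pt C B) zero_point Pt_zero_object _ _))).
  - intros E. exists zero_point, (to_zero_point P), (from_zero_point Q).
    split; [exact Pt_zero_object | apply PtHom_eq; exact E].
Qed.

Lemma Pt_isKernel_of_pullback {P Q Y : Point B} (m : PtHom Q P) (f : PtHom P Y) :
  isPullback (proj1_sig m) (pal Q) (proj1_sig f) (pbe Y) -> @isKernel (Pt C B) Q P Y m f.
Proof.
  intros Hpb. destruct m as [m0 [Hm1 Hm2]]. simpl in Hpb.
  split; [apply Pt_zeroMor; exact (proj1 Hpb) |].
  intros Z [g0 [Hg1 Hg2]] Hg. apply Pt_zeroMor in Hg. simpl in Hg.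
  destruct (pullback_lift Hpb _ g0 (pal Z) Hg) as [u0 [Hu1 Hu2]].
  assert (Pu : pal Q ∘ u0 = pal Z /\ u0 ∘ pbe Z = pbe Q).
  { split; [exact Hu2 |]. apply (pullback_ext Hpb).
    - rewrite (comp_eq_r Hu1), Hg2, Hm2; reflexivity.
    - rewrite (comp_eq_r Hu2), psplit, psplit; reflexivity. }
  exists (exist _ u0 Pu). split; [apply PtHom_eq; exact Hu1 |].
  intros [u1 [Hu'1 Hu'2]] Hu'. apply PtHom_eq; simpl.
  apply (f_equal (@proj1_sig _ _)) in Hu'. simpl in Hu'.
  apply (pullback_ext Hpb); [rewrite Hu', Hu1 | rewrite Hu'1, Hu2]; reflexivity.
Qed.

Lemma Pt_sameSubobject_of_factors {P Q1 Q2 : Point B} (m1 : PtHom Q1 P) (m2 : PtHom Q2 P)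
    (t1 : Hom (pA Q1) (pA Q2)) (t2 : Hom (pA Q2) (pA Q1)) :
  mono (proj1_sig m1) -> mono (proj1_sig m2) ->
  proj1_sig m2 ∘ t1 = proj1_sig m1 -> proj1_sig m1 ∘ t2 = proj1_sig m2 ->
  @sameSubobject (Pt C B) Q1 Q2 P m1 m2.
Proof.
  destruct m1 as [m1 [Hm11 Hm12]], m2 as [m2 [Hm21 Hm22]]; simpl.
  intros mm1 mm2 Ht1 Ht2.
  assert (P1 : pal Q2 ∘ t1 = pal Q1 /\ t1 ∘ pbe Q1 = pbe Q2).
  { split; [rewrite <- Hm21, <- comp_assoc, Ht1; exact Hm11 |].
    apply mm2. rewrite comp_assoc, Ht1, Hm12, Hm22; reflexivity. }
  assert (P2 : pal Q1 ∘ t2 = pal Q2 /\ t2 ∘ pbe Q2 = pbe Q1).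
  { split; [rewrite <- Hm11, <- comp_assoc, Ht2; exact Hm21 |].
    apply mm1. rewrite comp_assoc, Ht2, Hm12, Hm22; reflexivity. }
  exists (exist _ t1 P1). split; [| apply PtHom_eq; exact Ht1].
  exists (exist _ t2 P2). split; apply PtHom_eq; simpl.
  - apply mm1. rewrite comp_assoc, Ht2, Ht1, id_right; reflexivity.
  - apply mm2. rewrite comp_assoc, Ht1, Ht2, id_right; reflexivity.
Qed.

Section WithZero.
Variables (Z0 : C) (hZ : isZeroObject Z0).

Lemma KerImage_of_pullback {P Q Y : Point B} (m : PtHom Q P) (f : PtHom P Y)
    {Y0 G H : C} (pi1 : Hom (pA Y) Y0) (k : Hom G (pA P)) (h : Hom H G) :
  jointly_mono pi1 (pal Y) -> isPullback (proj1_sig m) (pal Q) (proj1_sig f) (pbe Y) ->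
  isKernel k (pal P) -> isKernel (k ∘ h) (pi1 ∘ proj1_sig f) -> KerImageIs k m h.
Proof.
  destruct m as [m0 Hm], f as [f0 Hf]. simpl.
  intros jm Hpb Kk Kkh.
  destruct (zeroMor_exists Z0 hZ H B) as [z Hz].
  destruct (pullback_lift Hpb _ (k ∘ h) z) as [k' [Hk1 Hk2]].
  { apply jm; apply (zeroMor_unique Z0 hZ).
    - rewrite comp_assoc. exact (proj1 Kkh).
    - assoc_r. apply zeroMor_compl, zeroMor_compl, Hz.
    - rewrite comp_assoc, (proj1 Hf), comp_assoc. apply zeroMor_compr, (proj1 Kk).
    - rewrite comp_assoc, psplit, id_left; exact Hz. }
  exists H, k', h. split; [| split; [exact (eq_sym Hk1) |]].
  - split; [rewrite Hk2; exact Hz |].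
    intros T g Hg.
    destruct (proj2 Kkh T (m0 ∘ g)) as [w [Hw _]].
    { assoc_r. rewrite (comp_eq_r (proj1 Hpb)); assoc_r. apply zeroMor_compl, zeroMor_compl, Hg. }
    assert (Ew : k' ∘ w = g).
    { apply (pullback_ext Hpb).
      - rewrite (comp_eq_r Hk1); exact Hw.
      - apply (zeroMor_unique Z0 hZ); [| exact Hg].
        rewrite (comp_eq_r Hk2); apply zeroMor_compr, Hz. }
    exists w. split; [exact Ew |].
    intros u' Hu'. apply (kernel_mono Kkh).
    rewrite <- Hk1, <- comp_assoc, Hu', <- Ew, comp_assoc, Hk1; reflexivity.
  - exists (idm H). split; [exists (idm H); split; apply id_left | apply id_right].
Qed.

Hypothesis hPB : hasPullbacks (C:=C).

(* The normal subpoint is the kernel of [<q, pal P> : P -> (Y0 × B, pi2, <q ∘ pbe P, 1>)]. *)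
Lemma normal_comp_lifts_to_Pt (P : Point B) {G H Y0 : C} (k : Hom G (pA P)) (h : Hom H G)
    (q : Hom (pA P) Y0) :
  isKernel k (pal P) -> isKernel (k ∘ h) q ->
  exists (Q : Point B) (m : PtHom Q P), @normalMono (Pt C B) Q P m /\ KerImageIs k m h.
Proof.
  intros Kk Kkh.
  destruct (proj2 hZ Y0) as [tY _]. destruct (proj2 hZ B) as [tB _].
  destruct (hPB Y0 B Z0 tY tB) as (YB & pi1 & pi2 & HYB).
  destruct (pullback_over_zero_lift Z0 hZ HYB _ q (pal P)) as [F [HF1 HF2]].
  destruct (pullback_over_zero_lift Z0 hZ HYB _ (q ∘ pbe P) (idm B)) as [Zs [HZ1 HZ2]].
  set (Yp := {| pA := YB; pal := pi2; pbe := Zs; psplit := HZ2 |} : Point B).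
  assert (Pf : pal Yp ∘ F = pal P /\ F ∘ pbe P = pbe Yp).
  { split; [exact HF2 |]. simpl. apply (pullback_ext HYB).
    - rewrite (comp_eq_r HF1), HZ1; reflexivity.
    - rewrite (comp_eq_r HF2), psplit; exact (eq_sym HZ2). }
  destruct (hPB _ _ _ F Zs) as (A' & h' & p & Hpb).
  destruct (pullback_lift Hpb _ (pbe P) (idm B)) as [b' [Hb1 Hb2]].
  { rewrite (proj2 Pf), id_right; reflexivity. }
  set (Q := {| pA := A'; pal := p; pbe := b'; psplit := Hb2 |} : Point B).
  assert (Pm : pal P ∘ h' = pal Q /\ h' ∘ pbe Q = pbe P).
  { split; [| exact Hb1]. simpl. rewrite <- HF2, <- comp_assoc, (proj1 Hpb), comp_assoc, HZ2.
    apply id_left. }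
  set (m := exist _ h' Pm : PtHom Q P). set (f := exist _ F Pf : PtHom P Yp).
  exists Q, m. split.
  - exists Yp, f. exact (Pt_isKernel_of_pullback m f Hpb).
  - apply (KerImage_of_pullback m f pi1 k h (pullback_ext HYB) Hpb Kk); simpl.
    rewrite HF1; exact Kkh.
Qed.

Hypothesis hPM : Protomodular (C:=C).

Lemma KerImage_mono {P Q : Point B} {G H : C} (k : Hom G (pA P)) (h : Hom H G) (m : PtHom Q P) :
  isKernel k (pal P) -> mono h -> KerImageIs k m h -> mono (proj1_sig m).
Proof.
  intros Kk mh (K' & k' & u & Kk' & Eku & i & iso_i & Ei).
  destruct m as [m0 [Hm1 Hm2]]; simpl in *.
  apply (mono_of_mono_on_kernel Z0 hZ hPB hPM (pal Q) (pbe Q) k' m0 (pal P) (psplit Q) Kk' Hm1).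
  rewrite <- Eku. apply mono_comp; [exact (kernel_mono Kk) |].
  rewrite <- Ei. apply mono_comp; [exact mh | exact (iso_mono i iso_i)].
Qed.

Lemma KerImage_factor {P Q1 Q2 : Point B} {G H : C} (k : Hom G (pA P)) (h : Hom H G)
    (m1 : PtHom Q1 P) (m2 : PtHom Q2 P) :
  KerImageIs k m1 h -> KerImageIs k m2 h -> mono (proj1_sig m2) ->
  exists t, proj1_sig m2 ∘ t = proj1_sig m1.
Proof.
  intros (K1 & k1 & u1 & Kk1 & Eku1 & i1 & _ & Ei1)
         (K2 & k2 & u2 & _ & Eku2 & i2 & [j2 [_ ij2]] & Ei2) mm2.
  apply (factors_through_mono_of_section_kernel Z0 hZ hPB hPM (pal Q1) (pbe Q1) _ _
           (psplit Q1) mm2).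
  - exists (pbe Q2). rewrite (proj2 (proj2_sig m1)), (proj2 (proj2_sig m2)); reflexivity.
  - intros T g Hg. destruct (proj2 Kk1 T g Hg) as [v [<- _]].
    exists (k2 ∘ (j2 ∘ (i1 ∘ v))).
    rewrite (comp_eq_r (eq_sym Eku2)), (comp_eq_r (eq_sym Eku1)), <- Ei1, <- Ei2. assoc_r.
    rewrite (comp_eq_r ij2), id_left; reflexivity.
Qed.
End WithZero.
End Points.

Lemma ToN_Ker_creates_normal_subobjects {C : Category} (HC : SemiAbelian (C:=C)) :
  ToN (C:=C) -> forall B : C, KerCreatesNormalSubobjects C B.
Proof.
  intros HT B P G k Kk H h Nh.
  destruct HC as [[Z0 hZ] [[[[_ hPB] _] _] [hPM _]]].
  split.
  - destruct (HT _ _ _ h k Nh (ex_intro _ B (ex_intro _ (pal P) Kk))) as (Y0 & q & Kq).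
    exact (normal_comp_lifts_to_Pt Z0 hZ hPB P k h q Kk Kq).
  - intros Q1 Q2 m1 m2 _ _ KI1 KI2.
    pose proof (normalMono_mono h Nh) as mh.
    pose proof (KerImage_mono Z0 hZ hPB hPM k h m1 Kk mh KI1) as mm1.
    pose proof (KerImage_mono Z0 hZ hPB hPM k h m2 Kk mh KI2) as mm2.
    destruct (KerImage_factor Z0 hZ hPB hPM k h m1 m2 KI1 KI2 mm2) as [t1 Ht1].
    destruct (KerImage_factor Z0 hZ hPB hPM k h m2 m1 KI2 KI1 mm1) as [t2 Ht2].
    exact (Pt_sameSubobject_of_factors m1 m2 t1 t2 mm1 mm2 Ht1 Ht2).
Qed.

Lemma Ker_creates_characteristic (C : Category) :
  (forall B : C, KerCreatesNormalSubobjects C B) ->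
  forall (H G : C) (h : Hom H G), normalMono h -> characteristic h.
Proof.
  intros Hcr H G h Nh A B k a b Kk ab.
  set (P := {| pA := A; pal := a; pbe := b; psplit := ab |} : Point B).
  destruct (Hcr B P G k Kk H h Nh) as [[Q [[m [Hm1 Hm2]] [_ KI]]] _].
  destruct KI as (K' & k' & u & Kk' & Eku & i & [j [ji ij]] & Ei). simpl in *.
  exists (pA Q), (k' ∘ j), (pal Q), (pbe Q).
  split; [exact (isKernel_comp_iso k' (pal Q) i j ji ij Kk') |].
  split; [exact (psplit Q) |].
  exists m. split; [| split; assumption].
  rewrite comp_assoc, <- Eku, <- Ei. assoc_r. rewrite ij, id_right; reflexivity.
Qed.

Theorem mainTheorem13 (C : Category) (HC : @SemiAbelian C) :
  (@ToN C <-> (forall (H G : C) (h : Hom H G), normalMono h -> characteristic h)) /\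
  ((forall (H G : C) (h : Hom H G), normalMono h -> characteristic h) <->
   (forall B : C, KerCreatesNormalSubobjects C B)).
Proof.
  pose proof (ToN_Ker_creates_normal_subobjects HC) as ToN_creates.
  pose proof (Ker_creates_characteristic C) as creates_characteristic.
  pose proof (characteristic_ToN HC) as characteristic_ToN_C.
  split; split; auto.
Qed.
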